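(* Let $C$ be a basic $k$-coalgebra. Then $C$ is prime if and only if every socle-finite localized coalgebra $eCe$ of $C$ is prime, where $e=e_{i_1}+\cdots+e_{i_n}$ ranges over finite sums of pairwise distinct primitive idempotents $e_{i_r}\in C^*$ associated with simple comodules. *)

From HB Require Import structures.
From mathcomp Require Import all_boot all_order all_algebra.
Set Implicit Arguments. Unset Strict Implicit. Unset Printing Implicit Defensive.
Import Order.TTheory GRing.Theory Num.Theory.
Local Open Scope ring_scope.

Definition islin (K : fieldType) (V : lmodType K) (f : V -> K) : Prop :=
  forall (a : K) (x y : V), f (a *: x + y) = a * f x + f y.

(* A comultiplication is given by  D : V -> seq (V * V), where D v is a
   representative  sum_r a_r (x) b_r  of Delta(v) in V (x) V.  Elements of
   V (x) V are compared through all pairings with f (x) g, f,g in V^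
   (V (x) V embeds in the dual of V^ (x) V^, V^ = dual space).  tpair D f g v = (f (x) g)(Delta v);
   as a binary operation on V* this is the convolution product of the dual algebra. *)
Definition tpair (K : fieldType) (V : lmodType K) (D : V -> seq (V * V))
  (f g : V -> K) (v : V) : K := \sum_(p <- D v) f p.1 * g p.2.

Definition is_coalgebra (K : fieldType) (V : lmodType K)
  (D : V -> seq (V * V)) (eps : V -> K) : Prop :=
  [/\ islin eps,
      (* Delta is linear *)
      forall f g, islin f -> islin g -> islin (tpair D f g),
      (* coassociativity, tested on f (x) g (x) h *)
      forall f g h, islin f -> islin g -> islin h -> forall v,
        \sum_(p <- D v) tpair D f g p.1 * h p.2
        = \sum_(p <- D v) f p.1 * tpair D g h p.2,
      forall f, islin f -> forall v, \sum_(p <- D v) eps p.1 * f p.2 = f v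
    & forall f, islin f -> forall v, \sum_(p <- D v) f p.1 * eps p.2 = f v].

(* dual-algebra actions on C:  x <- f = sum f(x1) x2,   f -> x = sum x1 f(x2). *)
Definition ract (K : fieldType) (V : lmodType K) (D : V -> seq (V * V))
  (x : V) (f : V -> K) : V := \sum_(p <- D x) f p.1 *: p.2.
Definition lact (K : fieldType) (V : lmodType K) (D : V -> seq (V * V))
  (f : V -> K) (x : V) : V := \sum_(p <- D x) f p.2 *: p.1.

Definition idem (K : fieldType) (V : lmodType K) (D : V -> seq (V * V))
  (f : V -> K) : Prop := forall v, tpair D f f v = f v.
Definition orth (K : fieldType) (V : lmodType K) (D : V -> seq (V * V))
  (f g : V -> K) : Prop := forall v, tpair D f g v = 0.
Definition primitive_idem (K : fieldType) (V : lmodType K)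
  (D : V -> seq (V * V)) (f : V -> K) : Prop :=
  [/\ idem D f, (exists v, f v != 0) &
      forall a b, islin a -> islin b -> idem D a -> idem D b ->
        orth D a b -> orth D b a -> (forall v, a v + b v = f v) ->
        (forall v, a v = 0) \/ (forall v, b v = 0)].

(* right C-comodule endomorphisms of C:  Delta o phi = (phi (x) id) o Delta *)
Definition comod_map (K : fieldType) (V : lmodType K) (D : V -> seq (V * V))
  (phi : V -> V) : Prop :=
  (forall (a : K) (x y : V), phi (a *: x + y) = a *: phi x + phi y) /\
  (forall al be, islin al -> islin be -> forall v,
      tpair D al be (phi v) = tpair D (fun x => al (phi x)) be v).

Definition iso_summands (K : fieldType) (V : lmodType K) (D : V -> seq (V * V))
  (E1 E2 : V -> Prop) : Prop :=
  exists phi psi, [/\ comod_map D phi /\ comod_map D psi,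
    forall x, E1 x -> E2 (phi x), forall y, E2 y -> E1 (psi y),
    forall x, E1 x -> psi (phi x) = x & forall y, E2 y -> phi (psi y) = y].

Definition summand (K : fieldType) (V : lmodType K) (D : V -> seq (V * V))
  (f : V -> K) : V -> Prop := fun v => exists x, v = ract D x f.

(* C is basic and (e_j)_{j in J} is the complete family of pairwise orthogonal
   primitive idempotents of the dual algebra associated with the simple comodules:
   C_C = (+)_j C <- e_j, each C <- e_j indecomposable (e_j primitive), i.e.
   the injective envelope of a simple comodule S(j), and these are pairwise
   non-isomorphic (basicness). *)
Definition basic_family (K : fieldType) (V : lmodType K) (D : V -> seq (V * V))
  (J : eqType) (e : J -> V -> K) : Prop :=
  [/\ forall j, islin (e j),
      forall j, primitive_idem D (e j),
      forall i j, i != j -> orth D (e i) (e j),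
      forall x : V, exists s : seq J,
        [/\ uniq s, x = \sum_(j <- s) ract D x (e j)
          & forall j, j \notin s -> ract D x (e j) = 0]
    & forall i j, i != j -> ~ iso_summands D (summand D (e i)) (summand D (e j))].

Definition sumidem (K : fieldType) (V : lmodType K) (J : eqType)
  (e : J -> V -> K) (F : seq J) : V -> K := fun v => \sum_(j <- F) e j v.

(* the localized coalgebra eCe = { e -> x <- e }, with
   Delta_e(y) = sum (e -> y1 <- e) (x) (e -> y2 <- e) *)
Definition loc_space (K : fieldType) (V : lmodType K) (D : V -> seq (V * V))
  (f : V -> K) : V -> Prop := fun y => exists x, y = lact D f (ract D x f).
Definition loc_cmul (K : fieldType) (V : lmodType K) (D : V -> seq (V * V))
  (f : V -> K) (y : V) : seq (V * V) :=
  [seq (lact D f (ract D p.1 f), lact D f (ract D p.2 f)) | p <- D y].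

(* A coalgebra (W, DW) (W a subspace of V, DW its comultiplication) is prime
   iff its dual algebra W^ (convolution product) is a prime ring:
   W^ <> 0 and  f W^ g = 0  implies  f = 0 or g = 0.
   Functionals on W are restrictions of functionals on V. *)
Definition prime_on (K : fieldType) (V : lmodType K) (W : V -> Prop)
  (DW : V -> seq (V * V)) : Prop :=
  (exists w, W w /\ w != 0) /\
  forall f g, islin f -> islin g ->
    (forall h, islin h -> forall w, W w -> tpair DW (tpair DW f h) g w = 0) ->
    (forall w, W w -> f w = 0) \/ (forall w, W w -> g w = 0).

Definition prime_coalgebra (K : fieldType) (V : lmodType K)
  (D : V -> seq (V * V)) : Prop := prime_on (fun _ => True) D.

From HB Require Import structures.
From mathcomp Require Import all_boot all_order all_algebra.
From Stdlib Require Import Classical FunctionalExtensionality.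
Set Implicit Arguments. Unset Strict Implicit. Unset Printing Implicit Defensive.
Import GRing.Theory.
Local Open Scope ring_scope.

(* Write C^* for the dual algebra (convolution [tpair D]) and E for an
   idempotent of C^*.  A functional a on eCe acts as a (E -> y <- E), that is as
   the element EaE of the corner ring E C^* E, and the convolution of eCe becomes
   the product of that corner ring.  A corner of a prime ring by a nonzero
   idempotent is prime, which gives one direction.  Conversely, if f C^* g = 0
   with f x <> 0 <> g y, then, C being the direct sum of the C <- e_j, a finite
   sum E = e_F of the e_j acts as a unit at x, at y and at the coproducts of
   x and y, so that EfE and EgE are nonzero while EfE (E C^* E) EgE = 0 in the
   prime corner. *)

Section Functionals.
Variables (K : fieldType) (V : lmodType K).
Implicit Types (f : V -> K).

Lemma islin0 f : islin f -> f 0 = 0.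
Proof.
move=> hf; have := hf 1 0 0; rewrite scale1r addr0 mul1r.
by move/(congr1 (fun t => t - f 0)); rewrite addrK subrr.
Qed.

Lemma islinD f x y : islin f -> f (x + y) = f x + f y.
Proof. by move=> hf; rewrite -[x]scale1r hf mul1r scale1r. Qed.

Lemma islinZ f a x : islin f -> f (a *: x) = a * f x.
Proof. by move=> hf; rewrite -[a *: x]addr0 hf islin0 // addr0. Qed.

Lemma islin_sum f (I : Type) (s : seq I) (F : I -> V) :
  islin f -> f (\sum_(i <- s) F i) = \sum_(i <- s) f (F i).
Proof.
move=> hf; elim: s => [|i s IHs]; first by rewrite !big_nil islin0.
by rewrite !big_cons islinD // IHs.
Qed.

End Functionals.

Lemma eq_big_supp (R : nmodType) (J : eqType) (s t : seq J) (phi : J -> R) :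
  uniq s -> uniq t ->
  (forall j, j \notin s -> phi j = 0) -> (forall j, j \notin t -> phi j = 0) ->
  \sum_(j <- s) phi j = \sum_(j <- t) phi j.
Proof.
move=> us ut phis phit.
rewrite (bigID (mem t)) [in RHS](bigID (mem s)) /=.
rewrite [X in _ + X]big1; last by move=> j /phit.
rewrite [X in _ = _ + X]big1; last by move=> j /phis.
rewrite !addr0 -[LHS]big_filter -[RHS]big_filter.
apply/perm_big/uniq_perm; rewrite ?filter_uniq //.
by move=> j; rewrite !mem_filter andbC.
Qed.

Section Convolution.
Variables (K : fieldType) (V : lmodType K) (D : V -> seq (V * V)).
Implicit Types (a b c f g h E : V -> K).

Lemma ract_eval a b v : islin a -> a (ract D v b) = tpair D b a v.
Proof. by move=> ha; rewrite /ract islin_sum //; apply: eq_bigr => p _; rewrite islinZ. Qed.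

Lemma lact_eval a b v : islin a -> a (lact D b v) = tpair D a b v.
Proof.
by move=> ha; rewrite /lact islin_sum //; apply: eq_bigr => p _; rewrite islinZ // mulrC.
Qed.

Lemma tpair_eq0l a b : (forall v, a v = 0) -> forall v, tpair D a b v = 0.
Proof. by move=> a0 v; rewrite /tpair big1 // => p _; rewrite a0 mul0r. Qed.

Lemma tpair_eq0r a b : (forall v, b v = 0) -> forall v, tpair D a b v = 0.
Proof. by move=> b0 v; rewrite /tpair big1 // => p _; rewrite b0 mulr0. Qed.

Lemma tpair_sumideml (J : eqType) (e : J -> V -> K) F b v :
  tpair D (sumidem e F) b v = \sum_(j <- F) tpair D (e j) b v.
Proof. by rewrite /tpair exchange_big; apply: eq_bigr => p _; rewrite big_distrl. Qed.

Lemma tpair_sumidemr (J : eqType) (e : J -> V -> K) F a v :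
  tpair D a (sumidem e F) v = \sum_(j <- F) tpair D a (e j) v.
Proof. by rewrite /tpair exchange_big; apply: eq_bigr => p _; rewrite big_distrr. Qed.

Lemma tpair_loc_cmul E a b :
  tpair (loc_cmul D E) a b =
  tpair D (fun y => a (lact D E (ract D y E))) (fun y => b (lact D E (ract D y E))).
Proof. by apply: functional_extensionality => v; rewrite /tpair big_map. Qed.

Definition corner E a : V -> K := tpair D E (tpair D a E).

Section Coalgebra.
Variable eps : V -> K.
Hypothesis coalgC : is_coalgebra D eps.

Lemma tpair_lin a b : islin a -> islin b -> islin (tpair D a b).
Proof. by case: coalgC => _ + _ _ _; apply. Qed.

Local Hint Resolve tpair_lin : core.

Lemma tpairA a b c : islin a -> islin b -> islin c ->
  tpair D (tpair D a b) c = tpair D a (tpair D b c).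
Proof.
by case: coalgC => _ _ + _ _ ha hb hc => tA; apply: functional_extensionality; apply: tA.
Qed.

Lemma eps_ract a v : islin a -> eps (ract D v a) = a v.
Proof.
case: coalgC => lin_eps _ _ _ counitr ha.
by rewrite ract_eval // -[RHS]counitr.
Qed.

Section Corner.
Variable E : V -> K.
Hypotheses (linE : islin E) (idemE : tpair D E E = E).

Lemma corner_lin a : islin a -> islin (corner E a).
Proof. by move=> ha; apply: tpair_lin => //; apply: tpair_lin. Qed.

Local Hint Resolve corner_lin : core.

Lemma loc_eval a y : islin a -> a (lact D E (ract D y E)) = corner E a y.
Proof. by move=> ha; rewrite lact_eval // ract_eval; auto. Qed.

Lemma loc_tpair a b : islin a -> islin b ->
  tpair (loc_cmul D E) a b = tpair D (corner E a) (corner E b).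
Proof.
move=> ha hb; rewrite tpair_loc_cmul.
by congr tpair; apply: functional_extensionality => y; rewrite loc_eval.
Qed.

Lemma tpairEE a : islin a -> tpair D E (tpair D E a) = tpair D E a.
Proof. by move=> ha; rewrite -tpairA // idemE. Qed.

Local Ltac normalize_tpair :=
  rewrite /corner !tpairA; try solve [auto 20]; rewrite ?tpairEE ?idemE; try solve [auto 20].

Lemma loc_tpair3 f h g : islin f -> islin h -> islin g ->
  tpair (loc_cmul D E) (tpair (loc_cmul D E) f h) g
  = tpair D (tpair D (corner E f) h) (corner E g).
Proof.
move=> hf hh hg; have hfh : islin (tpair D (corner E f) (corner E h)) by auto.
by rewrite (loc_tpair hf hh) (loc_tpair hfh hg); normalize_tpair.
Qed.

Lemma corner_tpair3 f h g : islin f -> islin h -> islin g ->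
  corner E (tpair D (tpair D (corner E f) h) (corner E g))
  = tpair D (tpair D (corner E f) h) (corner E g).
Proof. by move=> hf hh hg; normalize_tpair. Qed.

Lemma loc_tpair3_corner f h g : islin f -> islin h -> islin g ->
  tpair (loc_cmul D E) (tpair (loc_cmul D E) f h) g
  = corner E (tpair D (tpair D f (corner E h)) g).
Proof. by move=> hf hh hg; rewrite loc_tpair3 //; normalize_tpair. Qed.

Lemma prime_corner : prime_coalgebra D -> (exists v, E v != 0) ->
  prime_on (loc_space D E) (loc_cmul D E).
Proof.
move=> [_ primeC] [v Ev]; split.
  exists (lact D E (ract D v E)); split; first by exists v.
  apply: contraNneq Ev => v0.
  have <- : corner E E v = E v by rewrite /corner !idemE.
  by rewrite -loc_eval // v0 islin0.
move=> f g hf hg fhg0.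
case: (primeC _ _ (corner_lin hf) (corner_lin hg)) => [h hh w _|f0|g0].
- rewrite -corner_tpair3 // -loc_eval; last by auto.
  by rewrite -loc_tpair3 //; apply: fhg0 => //; exists w.
- by left=> _ [x ->]; rewrite loc_eval //; apply: f0.
- by right=> _ [x ->]; rewrite loc_eval //; apply: g0.
Qed.

End Corner.

Section IdempotentFamily.
Variables (J : eqType) (e : J -> V -> K).
Hypotheses (lin_e : forall j, islin (e j)) (idem_e : forall j, idem D (e j))
  (orth_e : forall i j, i != j -> orth D (e i) (e j)).

Lemma sumidem_lin F : islin (sumidem e F).
Proof.
by move=> a x y; rewrite /sumidem big_distrr -big_split; apply: eq_bigr => j _; apply: lin_e.
Qed.

Local Hint Resolve sumidem_lin : core.

Lemma tpair_sumidem_mem F j : uniq F -> j \in F -> tpair D (e j) (sumidem e F) = e j.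
Proof.
move=> uF jF; apply: functional_extensionality => v.
rewrite tpair_sumidemr (bigD1_seq j) //= idem_e big1 ?addr0 // => i ij.
by apply: orth_e; rewrite eq_sym.
Qed.

Lemma sumidem_idem F : uniq F -> tpair D (sumidem e F) (sumidem e F) = sumidem e F.
Proof.
move=> uF; apply: functional_extensionality => v.
by rewrite tpair_sumideml; apply: eq_big_seq => j jF; rewrite tpair_sumidem_mem.
Qed.

Lemma sumidem_neq0 F : (forall j, exists v, e j v != 0) -> uniq F -> F != [::] ->
  exists v, sumidem e F v != 0.
Proof.
case: F => [//|j F] nz_e uF _; have [v ejv] := nz_e j.
by exists (ract D v (e j)); rewrite ract_eval // tpair_sumidem_mem ?mem_head.
Qed.

Hypothesis decomp_e : forall x : V, exists s : seq J,
  [/\ uniq s, x = \sum_(j <- s) ract D x (e j)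
    & forall j, j \notin s -> ract D x (e j) = 0].

Definition in_summands (S : seq J) (x : V) : Prop :=
  forall j, j \notin S -> ract D x (e j) = 0.

Lemma sum_in_summands S x a : uniq S -> in_summands S x -> islin a ->
  a x = \sum_(j <- S) a (ract D x (e j)).
Proof.
move=> uS Sx ha; have [s [us xE sx]] := decomp_e x.
rewrite {1}xE islin_sum //.
by apply: eq_big_supp => // j; [move/sx | move/Sx] => ->; rewrite islin0.
Qed.

Lemma sumidem_eps S x : uniq S -> in_summands S x -> sumidem e S x = eps x.
Proof.
move=> uS Sx; have [lin_eps _ _ _ _] := coalgC.
by rewrite (sum_in_summands uS Sx lin_eps); apply: eq_bigr => j _; rewrite eps_ract.
Qed.

Lemma tpair_sumidem_l S a x : uniq S -> in_summands S x -> islin a ->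
  tpair D (sumidem e S) a x = a x.
Proof.
move=> uS Sx ha; rewrite tpair_sumideml (sum_in_summands uS Sx ha).
by apply: eq_bigr => j _; rewrite ract_eval.
Qed.

Lemma corner_sumidem S a x : uniq S -> in_summands S x ->
    (forall p, p \in D x -> in_summands S p.2) -> islin a ->
  corner (sumidem e S) a x = a x.
Proof.
(* On such x, E acts as the counit, so (f E)(x) = f x by the counit law. *)
move=> uS Sx Sx2 ha; rewrite /corner tpair_sumidem_l //; last by auto.
have [_ _ _ _ counitr] := coalgC; rewrite -[RHS]counitr //.
by apply: eq_big_seq => p /Sx2 Sp2; rewrite sumidem_eps.
Qed.

Lemma exists_in_summands (l : seq V) :
  exists S, uniq S /\ forall x, x \in l -> in_summands S x.
Proof.
elim: l => [|x l [S [uS lS]]]; first by exists [::].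
have [s [us _ sx]] := decomp_e x.
exists (undup (S ++ s)); split=> [|y]; first exact: undup_uniq.
rewrite inE => /predU1P[-> | yl] j; rewrite mem_undup mem_cat negb_or => /andP[jS js].
  exact: sx.
exact: lS.
Qed.

Lemma exists_corner_unit (l : seq V) : exists S, uniq S /\
  forall x, x \in l -> forall a, islin a -> corner (sumidem e S) a x = a x.
Proof.
have [S [uS lS]] := exists_in_summands (l ++ [seq p.2 | x <- l, p <- D x]).
exists S; split=> // x xl a ha; apply: corner_sumidem => //.
  by apply: lS; rewrite mem_cat xl.
move=> p pD; apply: lS; rewrite mem_cat; apply/orP; right.
by apply/allpairsPdep; exists x, p.
Qed.

Lemma prime_of_prime_loc : (exists x : V, x != 0) ->
    (forall F, uniq F -> F != [::] ->
       prime_on (loc_space D (sumidem e F)) (loc_cmul D (sumidem e F))) ->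
  prime_coalgebra D.
Proof.
move=> [x0 x0_neq0] prime_loc; split; first by exists x0.
move=> f g hf hg fCg0.
case: (classic (exists x, f x <> 0)) => [[x fx]|]; last first.
  by move=> f0; left=> w _; apply: NNPP => fw; apply: f0; exists w.
right=> y _; apply: NNPP => gy.
have [S [uS unitS]] := exists_corner_unit [:: x; y].
have [linE idemE] := (sumidem_lin S, sumidem_idem uS).
have Ef : corner (sumidem e S) f x = f x by apply: unitS; rewrite ?inE ?eqxx.
have Eg : corner (sumidem e S) g y = g y by apply: unitS; rewrite ?inE ?eqxx ?orbT.
have S_neq0 : S != [::].
  apply/eqP => S0; apply: fx; rewrite -Ef /corner S0.
  by apply: tpair_eq0l => v; rewrite /sumidem big_nil.
have [_ primeS] := prime_loc S uS S_neq0.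
case: (primeS f g hf hg) => [h hh w _|f0|g0].
- rewrite (loc_tpair3_corner linE idemE hf hh hg).
  apply: tpair_eq0r => v; apply: tpair_eq0l => u.
  by apply: fCg0 => //; apply: corner_lin.
- by apply: fx; rewrite -Ef -loc_eval //; apply: f0; exists x.
- by apply: gy; rewrite -Eg -loc_eval //; apply: g0; exists y.
Qed.

End IdempotentFamily.
End Coalgebra.
End Convolution.

Theorem mainTheorem3 (K : fieldType) (V : lmodType K)
  (D : V -> seq (V * V)) (eps : V -> K) (J : eqType) (e : J -> V -> K) :
  is_coalgebra D eps -> (exists x : V, x != 0) -> basic_family D e ->
  (prime_coalgebra D <->
   (forall F : seq J, uniq F -> F != [::] ->
      prime_on (loc_space D (sumidem e F)) (loc_cmul D (sumidem e F)))).
Proof.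
move=> coalgC V_neq0 [lin_e prim_e orth_e decomp_e _].
have idem_e j : idem D (e j) by case: (prim_e j).
have nz_e j : exists v, e j v != 0 by case: (prim_e j).
split=> [primeC F uF F_neq0 | prime_loc].
  apply: (prime_corner coalgC (sumidem_lin lin_e F)) => //.
    exact: sumidem_idem.
  exact: sumidem_neq0.
exact: (prime_of_prime_loc coalgC lin_e idem_e orth_e decomp_e).
Qed.
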